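(* Let $(A,\cdot)$ be a commutative associative algebra and $(P,Q)$ an admissible pair on it. Then $Q(x)\cdot y-x\cdot Q(y)=P(x)\cdot y-x\cdot P(y)$ for all $x,y\in A$, and the bracket $[x,y]=Q(x)\cdot y-x\cdot Q(y)$ makes $(A,[-,-])$ a Lie algebra. Moreover, if $\mathcal B$ is a symmetric bilinear form on $A$ which is invariant on $(A,\cdot)$, i.e. $\mathcal B(x\cdot y,z)=\mathcal B(x,y\cdot z)$ for all $x,y,z$, then $\mathcal B$ is a commutative 2-cocycle on $(A,[-,-])$.
   Context: All vector spaces are finite-dimensional over a field $\mathbb F$ of characteristic $0$. An admissible pair on a commutative associative algebra $(A,\cdot)$ is a pair of linear maps $P,Q:A\to A$ with $Q(x\cdot y)=Q(x)\cdot y+x\cdot P(y)$ for all $x,y\in A$. A commutative 2-cocycle on a Lie algebra is a symmetric bilinear form $\mathcal B$ with $\mathcal B([x,y],z)+\mathcal B([y,z],x)+\mathcal B([z,x],y)=0$. *)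

From HB Require Import structures.
From mathcomp Require Import all_boot all_order all_algebra.
Set Implicit Arguments. Unset Strict Implicit. Unset Printing Implicit Defensive.
Import GRing.Theory.
Local Open Scope ring_scope.

Definition bilinear_map (F : fieldType) (V W : lmodType F) (m : V -> V -> W) :=
  (forall (a : F) (x y z : V), m (a *: x + y) z = a *: m x z + m y z) /\
  (forall (a : F) (x y z : V), m x (a *: y + z) = a *: m x y + m x z).

Definition comm_assoc_algebra (F : fieldType) (V : lmodType F) (mul : V -> V -> V) :=
  [/\ bilinear_map mul,
      (forall x y, mul x y = mul y x) &
      (forall x y z, mul (mul x y) z = mul x (mul y z))].

Definition admissible_pair (F : fieldType) (V : lmodType F) (mul : V -> V -> V)
  (P Q : V -> V) := forall x y, Q (mul x y) = mul (Q x) y + mul x (P y).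

Definition lie_bracket (F : fieldType) (V : lmodType F) (br : V -> V -> V) :=
  [/\ bilinear_map br,
      (forall x, br x x = 0) &
      (forall x y z, br (br x y) z + br (br y z) x + br (br z x) y = 0)].

Definition sym_bilin_form (F : fieldType) (V : lmodType F) (B : V -> V -> F^o) :=
  bilinear_map B /\ forall x y, B x y = B y x.

Definition mul_invariant_form (F : fieldType) (V : lmodType F) (mul : V -> V -> V)
  (B : V -> V -> F^o) := forall x y z, B (mul x y) z = B x (mul y z).

Definition comm_2cocycle (F : fieldType) (V : lmodType F) (br : V -> V -> V)
  (B : V -> V -> F^o) :=
  sym_bilin_form B /\
  forall x y z, B (br x y) z + B (br y z) x + B (br z x) y = 0.

From HB Require Import structures.
From mathcomp Require Import all_boot all_order all_algebra.
Set Implicit Arguments. Unset Strict Implicit. Unset Printing Implicit Defensive.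
Import GRing.Theory.
Local Open Scope ring_scope.

(* Comparing the two expansions of Q(xy) = Q(yx) gives the first identity.
   Admissibility then yields Q[x,y] = y.PQx - x.PQy, so that
   [[x,y],z] = f(x,y,z) - f(y,z,x) with f(x,y,z) = PQx.(yz) + x.(Qy.Qz);
   likewise invariance and symmetry of B give B([x,y],z) = g(x,y,z) - g(y,z,x)
   with g(x,y,z) = B(Qx, yz).  Both cyclic sums therefore telescope to 0. *)

Lemma cyclic_sum_telescope (T : Type) (W : zmodType) (h f : T -> T -> T -> W) :
  (forall x y z, h x y z = f x y z - f y z x) ->
  forall x y z, h x y z + h y z x + h z x y = 0.
Proof. by move=> hf x y z; rewrite !hf subrKA subrKA subrr. Qed.

Section BilinearMap.
Variables (F : fieldType) (V W : lmodType F).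

Lemma bilinear_mapBl (m : V -> V -> W) : bilinear_map m ->
  forall x y z, m (x - y) z = m x z - m y z.
Proof.
move=> hm x y z.
by rewrite [x - y]addrC -[- y]scaleN1r hm.1 scaleN1r addrC.
Qed.

Lemma bilinear_map_diff (m1 m2 : V -> V -> W) :
  bilinear_map m1 -> bilinear_map m2 -> bilinear_map (fun x y => m1 x y - m2 x y).
Proof.
move=> hm1 hm2; split=> a x y z.
  by rewrite hm1.1 hm2.1 scalerBr opprD addrACA.
by rewrite hm1.2 hm2.2 scalerBr opprD addrACA.
Qed.

Lemma bilinear_map_compl (m : V -> V -> W) (f : {linear V -> V}) :
  bilinear_map m -> bilinear_map (fun x y => m (f x) y).
Proof. by move=> hm; split=> a x y z; rewrite ?linearP (hm.1, hm.2). Qed.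

Lemma bilinear_map_compr (m : V -> V -> W) (f : {linear V -> V}) :
  bilinear_map m -> bilinear_map (fun x y => m x (f y)).
Proof. by move=> hm; split=> a x y z; rewrite ?linearP (hm.1, hm.2). Qed.

End BilinearMap.

Definition admissible_bracket {F : fieldType} {V : lmodType F}
    (mul : V -> V -> V) (Q : V -> V) (x y : V) : V :=
  mul (Q x) y - mul x (Q y).

Section AdmissiblePair.
Variables (F : fieldType) (V : lmodType F) (mul : V -> V -> V).
Variables (P Q : {linear V -> V}).
Hypotheses (hA : comm_assoc_algebra mul) (hPQ : admissible_pair mul P Q).

Local Notation br := (admissible_bracket mul Q).

Let mulC x y : mul x y = mul y x. Proof. by case: hA. Qed.
Let mulA x y z : mul (mul x y) z = mul x (mul y z). Proof. by case: hA. Qed.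
Let mulCA x y z : mul x (mul y z) = mul y (mul x z).
Proof. by rewrite -mulA (mulC x) mulA. Qed.

Lemma admissible_bracketE x y : br x y = mul (P x) y - mul x (P y).
Proof.
have expand_Q_mulC : mul (Q x) y + mul x (P y) = mul x (Q y) + mul (P x) y.
  by rewrite -hPQ mulC hPQ (mulC (Q y)) (mulC y).
rewrite /admissible_bracket -[mul (Q x) y](addrK (mul x (P y))) expand_Q_mulC.
by rewrite addrAC [_ + mul (P x) y]addrC addrK.
Qed.

Lemma admissible_bracketxx x : br x x = 0.
Proof. by rewrite /admissible_bracket mulC subrr. Qed.

Lemma admissible_bracket_bilinear : bilinear_map br.
Proof.
have [hm _ _] := hA.
exact: bilinear_map_diff (bilinear_map_compl _ hm) (bilinear_map_compr _ hm).
Qed.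

Lemma Q_admissible_bracket x y :
  Q (br x y) = mul y (P (Q x)) - mul x (P (Q y)).
Proof.
rewrite /admissible_bracket (mulC (Q x)) linearB /= !hPQ (mulC (Q y)).
by rewrite opprD addrACA subrr add0r.
Qed.

Lemma admissible_bracket_nested x y z :
  let f u v w := mul (P (Q u)) (mul v w) + mul u (mul (Q v) (Q w)) in
  br (br x y) z = f x y z - f y z x.
Proof.
have [hm _ _] := hA.
rewrite /= {1}/admissible_bracket Q_admissible_bracket /admissible_bracket.
rewrite !(bilinear_mapBl hm) !mulA.
rewrite (mulCA y) (mulCA x (P _)) (mulC x z) (mulCA (Q x)) (mulC (Q z)).
by rewrite opprB opprD addrACA.
Qed.

Lemma admissible_bracket_lie : lie_bracket br.
Proof.
split; [exact: admissible_bracket_bilinear | exact: admissible_bracketxx |].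
exact: (cyclic_sum_telescope (h := fun x y z => br (br x y) z))
  admissible_bracket_nested.
Qed.

End AdmissiblePair.

Section InvariantForm.
Variables (F : fieldType) (V : lmodType F) (mul : V -> V -> V) (Q : V -> V).
Variable B : V -> V -> F^o.
Hypotheses (hB : sym_bilin_form B) (hinv : mul_invariant_form mul B).

Lemma invariant_form_admissible_bracket x y z :
  B (admissible_bracket mul Q x y) z = B (Q x) (mul y z) - B (Q y) (mul z x).
Proof.
have [hBbil hBC] := hB.
by rewrite /admissible_bracket (bilinear_mapBl hBbil) !hinv (hBC x) hinv.
Qed.

Lemma invariant_form_comm_2cocycle : comm_2cocycle (admissible_bracket mul Q) B.
Proof.
split=> //.
exact: (cyclic_sum_telescope (h := fun x y z => B (admissible_bracket mul Q x y) z))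
  invariant_form_admissible_bracket.
Qed.

End InvariantForm.

Theorem proposition3p24 (F : fieldType) (V : vectType F)
  (charF0 : [pchar F] =i pred0)
  (mul : V -> V -> V) (P Q : {linear V -> V})
  (hA : comm_assoc_algebra mul) (hPQ : admissible_pair mul P Q) :
  let br := fun x y => mul (Q x) y - mul x (Q y) in
  [/\ (forall x y, mul (Q x) y - mul x (Q y) = mul (P x) y - mul x (P y)),
      lie_bracket br &
      (forall B : V -> V -> F^o, sym_bilin_form B -> mul_invariant_form mul B ->
         comm_2cocycle br B)].
Proof.
split.
- exact: admissible_bracketE hA hPQ.
- exact: admissible_bracket_lie hA hPQ.
- by move=> B hB hinv; apply: invariant_form_comm_2cocycle.
Qed.
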